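(* Let $A$ be a faithful Banach algebra and let $B$ be a proper right abstract Segal algebra in $A$. Then $B^* \neq \langle B^* \triangle B^{**}\rangle$. Symmetrically, if $B$ is a proper left abstract Segal algebra in $A$, then $B^* \neq \langle B^{**} \square B^*\rangle$.
   Context: Arens-type module actions: for a Banach algebra $B$, $a,b\in B$, $f\in B^*$, $m\in B^{**}$, define $f\square a\in B^*$ by $\langle f\square a,b\rangle=\langle f,ab\rangle$ and $m\square f\in B^*$ by $\langle m\square f,a\rangle=\langle m,f\square a\rangle$; define $a\triangle f\in B^*$ by $\langle a\triangle f,b\rangle=\langle f,ba\rangle$ and $f\triangle m\in B^*$ by $\langle f\triangle m,a\rangle=\langle m,a\triangle f\rangle$. For sets $X,Y$ of such objects, $\langle X\triangle Y\rangle$ (resp. $\langle X\square Y\rangle$) denotes the linear span of all products $x\triangle y$ (resp. $x\square y$), $x\in X$, $y\in Y$. A faithful Banach algebra $A$ is one whose relevant annihilators are trivial (if $xa=0$ for all $x\in A$, or $ax=0$ for all $x\in A$, then $a=0$). A right abstract Segal algebra in $A$ is a dense subspace $B\subseteq A$ which is a right ideal of $A$ ($BA\subseteq B$) and is a Banach algebra under a norm $\|\cdot\|_B$ such that $\|b\|_A\le C\|b\|_B$ for $b\in B$ and $\|ba\|_B\le C\|b\|_B\|a\|_A$ for $b\in B$, $a\in A$, for some constant $C$; a left abstract Segal algebra is defined symmetrically ($AB\subseteq B$, $\|ab\|_B\le C\|a\|_A\|b\|_B$). It is proper if $\|\cdot\|_A$ and $\|\cdot\|_B$ are not equivalent on $B$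 (equivalently $B\neq A$). *)

From Stdlib Require Import Reals List.
Open Scope R_scope.

Record C := mkC { Re : R; Im : R }.
Definition C0 : C := mkC 0 0.
Definition C1 : C := mkC 1 0.
Definition Cadd (z w : C) : C := mkC (Re z + Re w) (Im z + Im w).
Definition Cmul (z w : C) : C :=
  mkC (Re z * Re w - Im z * Im w) (Re z * Im w + Im z * Re w).
Definition Cabs (z : C) : R := sqrt (Re z * Re z + Im z * Im z).

Record BanachAlgebra := {
  car :> Type;
  zero : car;
  add : car -> car -> car;
  opp : car -> car;
  scal : C -> car -> car;
  mul : car -> car -> car;
  norm : car -> R;
  add_assoc : forall x y z, add x (add y z) = add (add x y) z;
  add_comm : forall x y, add x y = add y x;
  add_zero : forall x, add x zero = x;
  add_opp : forall x, add x (opp x) = zero;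
  scal_assoc : forall c d x, scal c (scal d x) = scal (Cmul c d) x;
  scal_one : forall x, scal C1 x = x;
  scal_addr : forall c x y, scal c (add x y) = add (scal c x) (scal c y);
  scal_addl : forall c d x, scal (Cadd c d) x = add (scal c x) (scal d x);
  mul_assoc : forall x y z, mul x (mul y z) = mul (mul x y) z;
  mul_addr : forall x y z, mul x (add y z) = add (mul x y) (mul x z);
  mul_addl : forall x y z, mul (add x y) z = add (mul x z) (mul y z);
  mul_scall : forall c x y, mul (scal c x) y = scal c (mul x y);
  mul_scalr : forall c x y, mul x (scal c y) = scal c (mul x y);
  norm_ge0 : forall x, 0 <= norm x;
  norm_eq0 : forall x, norm x = 0 -> x = zero;
  norm_triangle : forall x y, norm (add x y) <= norm x + norm y;
  norm_scal : forall c x, norm (scal c x) = Cabs c * norm x;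
  norm_mul : forall x y, norm (mul x y) <= norm x * norm y;
  complete : forall u : nat -> car,
    (forall eps, 0 < eps -> exists N, forall p q, (N <= p)%nat -> (N <= q)%nat ->
        norm (add (u p) (opp (u q))) < eps) ->
    exists l, forall eps, 0 < eps -> exists N, forall p, (N <= p)%nat ->
        norm (add (u p) (opp l)) < eps
}.

Arguments zero {_}. Arguments add {_}. Arguments opp {_}. Arguments scal {_}.
Arguments mul {_}. Arguments norm {_}.

Definition faithful (A : BanachAlgebra) : Prop :=
  forall a : A, (forall x : A, mul x a = zero) \/ (forall x : A, mul a x = zero) -> a = zero.

Definition SegalBanach (A : BanachAlgebra) (mem : A -> Prop) (nB : A -> R) : Prop :=
  mem zero /\ (forall x y, mem x -> mem y -> mem (add x y)) /\
  (forall c x, mem x -> mem (scal c x)) /\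
  (forall x y, mem x -> mem y -> mem (mul x y)) /\
  (forall x, mem x -> 0 <= nB x) /\
  (forall x, mem x -> nB x = 0 -> x = zero) /\
  (forall x y, mem x -> mem y -> nB (add x y) <= nB x + nB y) /\
  (forall c x, mem x -> nB (scal c x) = Cabs c * nB x) /\
  (forall x y, mem x -> mem y -> nB (mul x y) <= nB x * nB y) /\
  (forall u : nat -> A, (forall k, mem (u k)) ->
    (forall eps, 0 < eps -> exists N, forall p q, (N <= p)%nat -> (N <= q)%nat ->
        nB (add (u p) (opp (u q))) < eps) ->
    exists l, mem l /\ forall eps, 0 < eps -> exists N, forall p, (N <= p)%nat ->
        nB (add (u p) (opp l)) < eps) /\
  (forall (a : A) eps, 0 < eps -> exists b, mem b /\ norm (add a (opp b)) < eps).

Definition right_segal (A : BanachAlgebra) (mem : A -> Prop) (nB : A -> R) : Prop :=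
  SegalBanach A mem nB /\
  (forall b a, mem b -> mem (mul b a)) /\
  exists K, (forall b, mem b -> norm b <= K * nB b) /\
            (forall b a, mem b -> nB (mul b a) <= K * nB b * norm a).

Definition left_segal (A : BanachAlgebra) (mem : A -> Prop) (nB : A -> R) : Prop :=
  SegalBanach A mem nB /\
  (forall b a, mem b -> mem (mul a b)) /\
  exists K, (forall b, mem b -> norm b <= K * nB b) /\
            (forall b a, mem b -> nB (mul a b) <= K * norm a * nB b).

(** Proper: the norms of A and B are not equivalent on B. *)
Definition proper (A : BanachAlgebra) (mem : A -> Prop) (nB : A -> R) : Prop :=
  ~ (exists c d, 0 < c /\ 0 < d /\
       forall b, mem b -> norm b <= c * nB b /\ nB b <= d * norm b).

(** * Dual and bidual of (B, nB).
   A functional is a map A -> C; only its values on B matter. *)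
Definition fadd (A : BanachAlgebra) (f g : A -> C) : A -> C := fun x => Cadd (f x) (g x).
Definition fscal (A : BanachAlgebra) (c : C) (f : A -> C) : A -> C := fun x => Cmul c (f x).

Definition fbound (A : BanachAlgebra) (mem : A -> Prop) (nB : A -> R) (f : A -> C) (K : R) :=
  0 <= K /\ forall x, mem x -> Cabs (f x) <= K * nB x.

Definition in_dual (A : BanachAlgebra) (mem : A -> Prop) (nB : A -> R) (f : A -> C) : Prop :=
  (forall x y, mem x -> mem y -> f (add x y) = Cadd (f x) (f y)) /\
  (forall c x, mem x -> f (scal c x) = Cmul c (f x)) /\
  exists K, fbound A mem nB f K.

Definition in_bidual (A : BanachAlgebra) (mem : A -> Prop) (nB : A -> R)
    (m : (A -> C) -> C) : Prop :=
  (forall f g, in_dual A mem nB f -> in_dual A mem nB g ->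
      m (fadd A f g) = Cadd (m f) (m g)) /\
  (forall c f, in_dual A mem nB f -> m (fscal A c f) = Cmul c (m f)) /\
  exists M, 0 <= M /\ forall f K, in_dual A mem nB f -> fbound A mem nB f K ->
      Cabs (m f) <= M * K.

Definition tri_af (A : BanachAlgebra) (a : A) (f : A -> C) : A -> C := fun b => f (mul b a).
Definition tri_fm (A : BanachAlgebra) (f : A -> C) (m : (A -> C) -> C) : A -> C :=
  fun a => m (tri_af A a f).
Definition sq_fa (A : BanachAlgebra) (f : A -> C) (a : A) : A -> C := fun b => f (mul a b).
Definition sq_mf (A : BanachAlgebra) (m : (A -> C) -> C) (f : A -> C) : A -> C :=
  fun a => m (sq_fa A f a).

(** Linear spans (as subsets of functionals, compared on B). *)
Definition span_tri (A : BanachAlgebra) (mem : A -> Prop) (nB : A -> R) (g : A -> C) : Prop :=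
  exists l : list (C * (A -> C) * ((A -> C) -> C)),
    Forall (fun t => in_dual A mem nB (snd (fst t)) /\ in_bidual A mem nB (snd t)) l /\
    forall a, mem a ->
      g a = fold_right (fun t acc => Cadd (Cmul (fst (fst t)) (tri_fm A (snd (fst t)) (snd t) a)) acc) C0 l.

Definition span_sq (A : BanachAlgebra) (mem : A -> Prop) (nB : A -> R) (g : A -> C) : Prop :=
  exists l : list (C * ((A -> C) -> C) * (A -> C)),
    Forall (fun t => in_bidual A mem nB (snd (fst t)) /\ in_dual A mem nB (snd t)) l /\
    forall a, mem a ->
      g a = fold_right (fun t acc => Cadd (Cmul (fst (fst t)) (sq_mf A (snd (fst t)) (snd t) a)) acc) C0 l.

(* Every functional of the
   form  f △ m  (right case) or  m □ f  (left case) is bounded with respect to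
   the norm of A, not merely the norm of B:
     |<f △ m, a>| = |<m, a △ f>| <= ||m|| ||f|| K ||a||_A,
   and the same bound passes to finite linear combinations.  Hence it suffices
   to exhibit one element of B* that is NOT bounded in the norm of A.

   Because the norms are not equivalent, B contains unit vectors b_n
   (||b_n||_B = 1) with (n+1) 4^n ||b_n||_A < 1.  Hahn-Banach (proved below via
   Zorn's lemma: a minimal sublinear functional is linear) gives real-linear
   functionals phi_n of B-norm one with phi_n(b_n) = 1, and a gliding-hump
   series  u = sum_k 4^-k (+-1) phi_k  produces a real-linear u, bounded for
   ||.||_B, with |u(b_n)| >= (2/3) 4^-n.  Its complexification lies in B*
   but is not bounded for ||.||_A. *)

From Pilot Require Import Defs.
From Stdlib Require Import Reals List Lra Lia ClassicalEpsilon Classical.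
From mathcomp Require classical_sets boolp.
Open Scope R_scope.

Definition Ci : Defs.C := mkC 0 1.

Lemma Cabs_ge0 (z : Defs.C) : 0 <= Cabs z.
Proof. apply sqrt_pos. Qed.

Lemma Cabs_real (t : R) : Cabs (mkC t 0) = Rabs t.
Proof. unfold Cabs; simpl. rewrite <- sqrt_Rsqr_abs. f_equal. unfold Rsqr. ring. Qed.

Lemma Cabs_Ci : Cabs Ci = 1.
Proof. unfold Cabs, Ci; simpl. replace (0 * 0 + 1 * 1) with 1 by ring. apply sqrt_1. Qed.

Lemma Cabs_mul (z w : Defs.C) : Cabs (Cmul z w) = Cabs z * Cabs w.
Proof. unfold Cabs, Cmul; simpl. rewrite <- sqrt_mult by nra. f_equal. ring. Qed.

(* The triangle inequality, via Cauchy-Schwarz in R^2. *)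
Lemma Cabs_triangle (z w : Defs.C) : Cabs (Cadd z w) <= Cabs z + Cabs w.
Proof.
  destruct z as [x1 y1], w as [x2 y2]; unfold Cabs, Cadd; simpl.
  pose proof (sqrt_pos (x1 * x1 + y1 * y1)) as H1.
  pose proof (sqrt_pos (x2 * x2 + y2 * y2)) as H2.
  pose proof (sqrt_sqrt (x1 * x1 + y1 * y1)) as E1.
  pose proof (sqrt_sqrt (x2 * x2 + y2 * y2)) as E2.
  rewrite <- (sqrt_square (sqrt (x1 * x1 + y1 * y1) + sqrt (x2 * x2 + y2 * y2))) by lra.
  apply sqrt_le_1_alt.
  set (r1 := sqrt (x1 * x1 + y1 * y1)) in *. set (r2 := sqrt (x2 * x2 + y2 * y2)) in *.
  assert (E1' : r1 * r1 = x1 * x1 + y1 * y1) by (apply E1; nra).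
  assert (E2' : r2 * r2 = x2 * x2 + y2 * y2) by (apply E2; nra).
  assert (CS : x1 * x2 + y1 * y2 <= r1 * r2).
  { assert ((x1 * x2 + y1 * y2) * (x1 * x2 + y1 * y2) <= (r1 * r2) * (r1 * r2)).
    { replace ((r1 * r2) * (r1 * r2)) with ((r1 * r1) * (r2 * r2)) by ring.
      rewrite E1', E2'. pose proof (Rle_0_sqr (x1 * y2 - y1 * x2)). unfold Rsqr in *. nra. }
    assert (0 <= r1 * r2) by nra. nra. }
  nra.
Qed.

Lemma Re_le_Cabs (z : Defs.C) : Rabs (Re z) <= Cabs z.
Proof.
  unfold Cabs. rewrite <- sqrt_Rsqr_abs. apply sqrt_le_1_alt.
  pose proof (Rle_0_sqr (Im z)). unfold Rsqr in *. lra.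
Qed.

Lemma Cabs_le_parts (a b : R) : Cabs (mkC a b) <= Rabs a + Rabs b.
Proof.
  pose proof (Rabs_pos a); pose proof (Rabs_pos b).
  unfold Cabs; simpl. rewrite <- (sqrt_square (Rabs a + Rabs b)) by lra.
  apply sqrt_le_1_alt.
  assert (a * a = Rabs a * Rabs a) by (rewrite <- Rabs_mult, Rabs_pos_eq; nra).
  assert (b * b = Rabs b * Rabs b) by (rewrite <- Rabs_mult, Rabs_pos_eq; nra).
  nra.
Qed.

Lemma lincomb_bounded {X T : Type} (w : X -> R) (P : T -> Prop)
    (coef : T -> Defs.C) (val : T -> X -> Defs.C) (l : list T) :
  Forall P l -> (forall t, P t -> exists D, forall x, Cabs (val t x) <= D * w x) ->
  exists D, forall x,
    Cabs (fold_right (fun t acc => Cadd (Cmul (coef t) (val t x)) acc) C0 l) <= D * w x.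
Proof.
  intros Hl HP. induction Hl as [|t l Ht _ [D IH]].
  - exists 0. intros x. simpl. unfold Cabs, C0; simpl.
    replace (0 * 0 + 0 * 0) with 0 by ring. rewrite sqrt_0. lra.
  - destruct (HP t Ht) as [Dt HDt]. exists (Cabs (coef t) * Dt + D). intros x. simpl.
    eapply Rle_trans; [apply Cabs_triangle|]. rewrite Cabs_mul.
    specialize (HDt x); specialize (IH x). pose proof (Cabs_ge0 (coef t)).
    assert (Cabs (coef t) * Cabs (val t x) <= Cabs (coef t) * (Dt * w x))
      by (apply Rmult_le_compat_l; auto).
    nra.
Qed.

Section RealScalars.
Context {A : BanachAlgebra}.

(* Multiplication by a real scalar: Hahn-Banach and the gliding hump only use
   the real vector-space structure. *)
Definition rscal (t : R) (x : A) : A := scal (mkC t 0) x.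

Lemma add_zero_l (x : A) : add zero x = x.
Proof. rewrite add_comm. apply add_zero. Qed.

Lemma add_idem_zero (y : A) : add y y = y -> y = zero.
Proof.
  intros H. assert (E : add (add y y) (opp y) = add y (opp y)) by (rewrite H; reflexivity).
  rewrite <- add_assoc, add_opp, add_zero in E. exact E.
Qed.

Lemma rscal0 (x : A) : rscal 0 x = zero.
Proof.
  apply add_idem_zero. unfold rscal. rewrite <- scal_addl.
  f_equal. unfold Cadd; simpl; f_equal; ring.
Qed.

Lemma rscal1 (x : A) : rscal 1 x = x.
Proof. apply scal_one. Qed.

Lemma rscalA (s t : R) (x : A) : rscal s (rscal t x) = rscal (s * t) x.
Proof. unfold rscal. rewrite scal_assoc. f_equal. unfold Cmul; simpl; f_equal; ring. Qed.

Lemma rscalDl (s t : R) (x : A) : rscal (s + t) x = add (rscal s x) (rscal t x).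
Proof. unfold rscal. rewrite <- scal_addl. f_equal. unfold Cadd; simpl; f_equal; ring. Qed.

Lemma rscalDr (t : R) (x y : A) : rscal t (add x y) = add (rscal t x) (rscal t y).
Proof. apply scal_addr. Qed.

Lemma add_rscalN1 (x : A) : add x (rscal (-1) x) = zero.
Proof.
  pattern x at 1; rewrite <- (rscal1 x). rewrite <- rscalDl.
  replace (1 + -1) with 0 by ring. apply rscal0.
Qed.

Lemma add_subK (x y : A) : add (add x y) (rscal (-1) x) = y.
Proof. rewrite (add_comm A x y), <- add_assoc, add_rscalN1, add_zero. reflexivity. Qed.

Lemma add_ACA (a b c d : A) : add (add a b) (add c d) = add (add a c) (add b d).
Proof. rewrite <- !add_assoc. f_equal. rewrite !add_assoc. f_equal. apply add_comm. Qed.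

Lemma norm_rscal (t : R) (x : A) : norm (rscal t x) = Rabs t * norm x.
Proof. unfold rscal. rewrite norm_scal, Cabs_real. reflexivity. Qed.

Lemma scal_re_im (a b : R) (x : A) :
  scal (mkC a b) x = add (rscal a x) (rscal b (scal Ci x)).
Proof.
  unfold rscal. rewrite scal_assoc, <- scal_addl. f_equal.
  unfold Cadd, Cmul, Ci; simpl. f_equal; ring.
Qed.

Lemma Ci_scal_re_im (a b : R) (x : A) :
  scal Ci (scal (mkC a b) x) = add (rscal (- b) x) (rscal a (scal Ci x)).
Proof.
  rewrite scal_assoc, <- scal_re_im. f_equal. unfold Cmul, Ci; simpl. f_equal; ring.
Qed.

End RealScalars.

Definition sup (E : R -> Prop) : R := epsilon (inhabits 0) (is_lub E).

Lemma sup_is_lub (E : R -> Prop) : bound E -> (exists x, E x) -> is_lub E (sup E).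
Proof.
  intros Hb Hne. unfold sup. apply epsilon_spec.
  destruct (completeness E Hb Hne) as [m Hm]. eauto.
Qed.

Definition inf (E : R -> Prop) : R := - sup (fun y => E (- y)).

Lemma inf_is_glb (E : R -> Prop) (L : R) :
  (exists x, E x) -> (forall y, E y -> L <= y) ->
  (forall y, E y -> inf E <= y) /\ (forall L', (forall y, E y -> L' <= y) -> L' <= inf E).
Proof.
  intros [x Hx] HL.
  assert (Hlub : is_lub (fun y => E (- y)) (sup (fun y => E (- y)))).
  { apply sup_is_lub.
    - exists (- L). intros y Hy. specialize (HL _ Hy). lra.
    - exists (- x). rewrite Ropp_involutive. exact Hx. }
  unfold inf. split.
  - intros y Hy.
    assert (- y <= sup (fun y => E (- y))) by (apply (proj1 Hlub); rewrite Ropp_involutive; exact Hy).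
    lra.
  - intros L' HL'. assert (sup (fun y => E (- y)) <= - L').
    { apply (proj2 Hlub). intros y Hy. specialize (HL' _ Hy). lra. }
    lra.
Qed.

Lemma inf_le (E : R -> Prop) (L x : R) : (forall y, E y -> L <= y) -> E x -> inf E <= x.
Proof. intros HL Hx. apply (inf_is_glb E L); eauto. Qed.

Lemma le_inf (E : R -> Prop) (L : R) : (exists x, E x) -> (forall y, E y -> L <= y) -> L <= inf E.
Proof. intros Hne HL. apply (inf_is_glb E L); auto. Qed.

Lemma inf_const (E : R -> Prop) (c : R) : (exists x, E x) -> (forall y, E y -> y = c) -> inf E = c.
Proof.
  intros [x Hx] Hc. apply Rle_antisym.
  - rewrite <- (Hc x Hx). apply inf_le with c; [intros y Hy; rewrite (Hc y Hy); lra | exact Hx].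
  - apply le_inf; [eauto | intros y Hy; rewrite (Hc y Hy); lra].
Qed.

(* inf (E1 + E2) <= inf E1 + inf E2, phrased for any E below E1 + E2. *)
Lemma inf_add_le (E E1 E2 : R -> Prop) : (exists x, E1 x) -> (exists x, E2 x) ->
  (forall e1 e2, E1 e1 -> E2 e2 -> inf E <= e1 + e2) -> inf E <= inf E1 + inf E2.
Proof.
  intros Hne1 Hne2 H.
  assert (Hstep : forall e2, E2 e2 -> inf E - e2 <= inf E1).
  { intros e2 He2. apply le_inf; [exact Hne1|]. intros e1 He1. specialize (H e1 e2 He1 He2). lra. }
  assert (inf E - inf E1 <= inf E2).
  { apply le_inf; [exact Hne2|]. intros e2 He2. specialize (Hstep e2 He2). lra. }
  lra.
Qed.

Lemma inf_scale (E F : R -> Prop) (c L : R) : 0 <= c -> (exists x, E x) ->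
  (forall y, E y -> L <= y) -> (forall y, F y <-> exists z, E z /\ y = c * z) ->
  inf F = c * inf E.
Proof.
  intros Hc [x0 Hx0] HL HF.
  destruct (Req_dec c 0) as [-> | Hc0].
  - rewrite Rmult_0_l. apply inf_const.
    + exists (0 * x0). apply HF. eauto.
    + intros y Hy. apply HF in Hy. destruct Hy as [z [_ ->]]. ring.
  - assert (Hcp : 0 < c) by lra.
    assert (HFL : forall y, F y -> c * L <= y).
    { intros y Hy. apply HF in Hy. destruct Hy as [z [Hz ->]]. specialize (HL z Hz). nra. }
    apply Rle_antisym.
    + assert (H : / c * inf F <= inf E).
      { apply le_inf; [eauto|]. intros z Hz.
        assert (inf F <= c * z) by (apply inf_le with (c * L); [exact HFL | apply HF; eauto]).
        apply Rmult_le_reg_l with c; [lra|].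
        rewrite <- Rmult_assoc, Rinv_r, Rmult_1_l by lra. exact H. }
      apply Rmult_le_compat_l with (r := c) in H; [|lra].
      rewrite <- Rmult_assoc, Rinv_r, Rmult_1_l in H by lra. exact H.
    + apply le_inf; [exists (c * x0); apply HF; eauto|].
      intros y Hy. apply HF in Hy. destruct Hy as [z [Hz ->]].
      apply Rmult_le_compat_l; [lra | apply inf_le with L; auto].
Qed.

(** * Hahn-Banach on a real subspace *)

Section HahnBanach.
Context {A : BanachAlgebra} (V : A -> Prop).
Hypothesis V0 : V zero.
Hypothesis VD : forall x y, V x -> V y -> V (add x y).
Hypothesis VZ : forall t x, V x -> V (rscal t x).

Definition sublinear (q : A -> R) : Prop :=
  (forall x y, V x -> V y -> q (add x y) <= q x + q y) /\
  (forall t x, 0 <= t -> V x -> q (rscal t x) = t * q x).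

Definition rlinear (q : A -> R) : Prop :=
  (forall x y, V x -> V y -> q (add x y) = q x + q y) /\
  (forall t x, V x -> q (rscal t x) = t * q x).

Definition below (q r : A -> R) : Prop := forall x, V x -> q x <= r x.

Lemma sublinear_zero (q : A -> R) : sublinear q -> q zero = 0.
Proof. intros [_ Hh]. rewrite <- (rscal0 zero), Hh by (auto; lra). ring. Qed.

Lemma sublinear_opp (q : A -> R) (x : A) : sublinear q -> V x -> - q (rscal (-1) x) <= q x.
Proof.
  intros Hq Hx. pose proof (proj1 Hq x (rscal (-1) x) Hx (VZ _ _ Hx)) as H.
  rewrite add_rscalN1, (sublinear_zero q Hq) in H. lra.
Qed.

Lemma odd_sublinear_rlinear (q : A -> R) : sublinear q ->
  (forall x, V x -> q (rscal (-1) x) = - q x) -> rlinear q.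
Proof.
  intros Hq Hodd. split.
  - intros x y Hx Hy. apply Rle_antisym; [apply Hq; auto|].
    pose proof (proj1 Hq _ _ (VZ (-1) _ Hx) (VZ (-1) _ Hy)) as H.
    rewrite <- rscalDr, !Hodd in H by auto. lra.
  - intros t x Hx. destruct (Rle_dec 0 t) as [Ht | Ht]; [apply Hq; auto|].
    replace t with (-1 * - t) by ring.
    rewrite <- rscalA, Hodd, (proj2 Hq) by (auto; lra). ring.
Qed.

(* The directional infimum  inf_{t >= 0} q(x + t a) - t q(a): a sublinear
   functional below q that is "linear along a" at the point -a. *)
Definition dir_set (q : A -> R) (a x : A) : R -> Prop :=
  fun y => exists t, 0 <= t /\ y = q (add x (rscal t a)) - t * q a.

Definition dir_inf (q : A -> R) (a x : A) : R := inf (dir_set q a x).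

Lemma dir_set_lb (q : A -> R) (a x : A) : sublinear q -> V a -> V x ->
  forall y, dir_set q a x y -> - q (rscal (-1) x) <= y.
Proof.
  intros Hq Ha Hx y [t [Ht ->]].
  assert (E : q (rscal t a) = t * q a) by (apply Hq; auto).
  rewrite <- (add_subK x (rscal t a)) in E.
  pose proof (proj1 Hq _ _ (VD _ _ Hx (VZ t _ Ha)) (VZ (-1) _ Hx)). lra.
Qed.

Lemma dir_set_at0 (q : A -> R) (a x : A) : dir_set q a x (q x).
Proof. exists 0. split; [lra|]. rewrite rscal0, add_zero. ring. Qed.

Lemma dir_inf_le (q : A -> R) (a : A) : sublinear q -> V a -> below (dir_inf q a) q.
Proof.
  intros Hq Ha x Hx. apply inf_le with (- q (rscal (-1) x)).
  - apply dir_set_lb; auto.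
  - apply dir_set_at0.
Qed.

Lemma dir_inf_opp (q : A -> R) (a : A) : sublinear q -> V a ->
  dir_inf q a (rscal (-1) a) <= - q a.
Proof.
  intros Hq Ha. apply inf_le with (- q (rscal (-1) (rscal (-1) a))).
  - apply dir_set_lb; auto.
  - exists 1. split; [lra|].
    rewrite rscal1, add_comm, add_rscalN1, (sublinear_zero q Hq). ring.
Qed.

Lemma dir_inf_sublinear (q : A -> R) (a : A) : sublinear q -> V a -> sublinear (dir_inf q a).
Proof.
  intros Hq Ha. split.
  - intros x y Hx Hy. apply inf_add_le; [eexists; apply dir_set_at0 .. |].
    intros e1 e2 [s [Hs ->]] [t [Ht ->]].
    apply Rle_trans with (q (add (add x y) (rscal (s + t) a)) - (s + t) * q a).
    + apply inf_le with (- q (rscal (-1) (add x y))); [apply dir_set_lb; auto|].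
      exists (s + t). split; [lra | reflexivity].
    + rewrite rscalDl, add_ACA.
      pose proof (proj1 Hq _ _ (VD _ _ Hx (VZ s _ Ha)) (VD _ _ Hy (VZ t _ Ha))). lra.
  - intros t x Ht Hx. destruct (Req_dec t 0) as [-> | Ht0].
    + rewrite rscal0, Rmult_0_l. apply inf_const; [eexists; apply dir_set_at0|].
      intros y [s [Hs ->]]. rewrite add_zero_l, (proj2 Hq) by auto. ring.
    + apply inf_scale with (- q (rscal (-1) x)); [exact Ht | eexists; apply dir_set_at0 |
        apply dir_set_lb; auto |].
      intros y. split.
      * intros [s [Hs ->]].
        assert (E : add (rscal t x) (rscal s a) = rscal t (add x (rscal (s / t) a))).
        { rewrite rscalDr, rscalA. replace (t * (s / t)) with s by (field; lra). reflexivity. }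
        exists (q (add x (rscal (s / t) a)) - s / t * q a). split.
        -- exists (s / t). split; [apply Rle_mult_inv_pos; lra | reflexivity].
        -- rewrite E, (proj2 Hq) by auto. field. lra.
      * intros [z [[s [Hs ->]] ->]]. exists (t * s). split; [nra|].
        rewrite <- rscalA, <- rscalDr, (proj2 Hq) by auto. ring.
Qed.

(* A sublinear functional that is minimal (nothing sublinear lies strictly
   below it) is odd: compare it with its directional infimum. *)
Lemma minimal_sublinear_odd (q : A -> R) : sublinear q ->
  (forall q', sublinear q' -> below q' q -> below q q') ->
  forall a, V a -> q (rscal (-1) a) = - q a.
Proof.
  intros Hq Hmin a Ha.
  pose proof (Hmin _ (dir_inf_sublinear q a Hq Ha) (dir_inf_le q a Hq Ha) _ (VZ (-1) _ Ha)).
  pose proof (dir_inf_opp q a Hq Ha). pose proof (sublinear_opp q a Hq Ha). lra.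
Qed.

Definition chain_inf (Ch : (A -> R) -> Prop) (x : A) : R :=
  inf (fun y => exists q, Ch q /\ y = q x).

Lemma chain_inf_sublinear (r : A -> R) (Ch : (A -> R) -> Prop) :
  (forall q, Ch q -> sublinear q /\ below q r) -> (exists q, Ch q) ->
  (forall q1 q2, Ch q1 -> Ch q2 -> below q1 q2 \/ below q2 q1) ->
  sublinear (chain_inf Ch) /\ (forall q, Ch q -> below (chain_inf Ch) q).
Proof.
  intros HC [q0 Hq0] Hchain.
  assert (Hne : forall x, exists y, exists q, Ch q /\ y = q x) by (intros x; eauto).
  assert (Hlb : forall x, V x -> forall y, (exists q, Ch q /\ y = q x) -> - r (rscal (-1) x) <= y).
  { intros x Hx y [q [Hq ->]]. destruct (HC q Hq) as [Hs Hr].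
    pose proof (sublinear_opp q x Hs Hx). pose proof (Hr _ (VZ (-1) _ Hx)). lra. }
  assert (Hbelow : forall q, Ch q -> below (chain_inf Ch) q).
  { intros q Hq x Hx. apply inf_le with (- r (rscal (-1) x)); [apply Hlb; auto | eauto]. }
  split; [split | exact Hbelow].
  - intros x y Hx Hy. apply inf_add_le; [apply Hne .. |].
    intros e1 e2 [q1 [H1 ->]] [q2 [H2 ->]].
    destruct (HC q1 H1) as [[S1 _] _], (HC q2 H2) as [[S2 _] _].
    destruct (Hchain q1 q2 H1 H2) as [L | L].
    + apply Rle_trans with (q1 (add x y)); [apply Hbelow; auto|].
      pose proof (S1 x y Hx Hy). pose proof (L y Hy). lra.
    + apply Rle_trans with (q2 (add x y)); [apply Hbelow; auto|].
      pose proof (S2 x y Hx Hy). pose proof (L x Hx). lra.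
  - intros t x Ht Hx. apply inf_scale with (- r (rscal (-1) x)); [exact Ht | apply Hne | apply Hlb; auto |].
    intros y. split.
    + intros [q [Hq ->]]. exists (q x). split; [eauto | apply (HC q Hq); auto].
    + intros [z [[q [Hq ->]] ->]]. exists q. split; [exact Hq | symmetry; apply (HC q Hq); auto].
Qed.

Lemma sublinear_dominates_rlinear (r : A -> R) : sublinear r ->
  exists phi, rlinear phi /\ below phi r.
Proof.
  intros Hr.
  pose (T := {q : A -> R | sublinear q /\ below q r}).
  pose (le_T := fun s t : T => boolp.asbool (below (proj1_sig t) (proj1_sig s))).
  assert (Hr_in : sublinear r /\ below r r) by (split; [exact Hr | intros x _; lra]).
  destruct (@classical_sets.ZL_preorder T (exist _ r Hr_in) le_T) as [[q [Hq Hqr]] Hmax].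
  - intros s. apply boolp.asboolT. intros x _; lra.
  - intros s1 s2 s3 H12 H23. apply boolp.asboolT.
    apply boolp.asboolW in H12, H23. intros x Hx.
    specialize (H12 x Hx); specialize (H23 x Hx). lra.
  - intros chain Htot. destruct (classic (exists s, chain s)) as [[s0 Hs0] | Hempty].
    + pose (Ch := fun q => exists s : T, chain s /\ proj1_sig s = q).
      destruct (chain_inf_sublinear r Ch) as [Hinf Hbelow].
      * intros q' [s [_ <-]]. exact (proj2_sig s).
      * exists (proj1_sig s0), s0. auto.
      * intros q1 q2 [s1 [H1 <-]] [s2 [H2 <-]].
        destruct (Htot s1 s2 H1 H2) as [L | L]; apply boolp.asboolW in L; [right | left]; exact L.
      * assert (Hin : sublinear (chain_inf Ch) /\ below (chain_inf Ch) r).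
        { split; [exact Hinf|]. intros x Hx.
          apply Rle_trans with (proj1_sig s0 x); [apply (Hbelow (proj1_sig s0)); [exists s0; auto | exact Hx] | apply (proj2_sig s0); exact Hx]. }
        exists (exist _ (chain_inf Ch) Hin : T). intros s Hs. apply boolp.asboolT. apply Hbelow. exists s; auto.
    + exists (exist _ r Hr_in : T). intros s Hs. exfalso. eauto.
  - exists q. split; [|exact Hqr].
    apply odd_sublinear_rlinear; [exact Hq|].
    apply minimal_sublinear_odd; [exact Hq|].
    intros q' Hq' Hq'q.
    assert (Hin : sublinear q' /\ below q' r).
    { split; [exact Hq'|]. intros x Hx. apply Rle_trans with (q x); auto. }
    exact (boolp.asboolW (Hmax (exist _ q' Hin : T) (boolp.asboolT Hq'q))).
Qed.

Lemma norming_functional (p : A -> R) (b : A) : sublinear p ->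
  (forall x, V x -> p (rscal (-1) x) = p x) -> V b ->
  exists phi, rlinear phi /\ (forall x, V x -> Rabs (phi x) <= p x) /\ phi b = p b.
Proof.
  intros Hp Hsym Hb.
  destruct (sublinear_dominates_rlinear (dir_inf p b) (dir_inf_sublinear p b Hp Hb))
    as [phi [[Hadd Hhom] Hle]].
  assert (Hphi_p : below phi p).
  { intros x Hx. apply Rle_trans with (dir_inf p b x); [auto | apply dir_inf_le; auto]. }
  exists phi. split; [split; auto | split].
  - intros x Hx. apply Rabs_le. split; [|auto].
    pose proof (Hphi_p _ (VZ (-1) _ Hx)). rewrite Hhom, Hsym in H by auto. lra.
  - pose proof (Hle _ (VZ (-1) _ Hb)). pose proof (dir_inf_opp p b Hp Hb).
    pose proof (Hphi_p b Hb). rewrite Hhom in H by auto. lra.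
Qed.

End HahnBanach.

Definition lim (s : nat -> R) : R := epsilon (inhabits 0) (Un_cv s).

Lemma lim_spec (s : nat -> R) : Cauchy_crit s -> Un_cv s (lim s).
Proof.
  intros H. unfold lim. apply epsilon_spec.
  destruct (R_complete s H) as [l Hl]. eauto.
Qed.

Lemma Un_cv_const (c : R) : Un_cv (fun _ => c) c.
Proof. intros eps He. exists O. intros n _. unfold R_dist. rewrite Rminus_diag, Rabs_R0. lra. Qed.

Lemma geometric_cauchy (s : nat -> R) (K : R) : 0 <= K ->
  (forall n m, (n <= m)%nat -> Rabs (s m - s n) <= K * (/4) ^ n) -> Cauchy_crit s.
Proof.
  intros HK Hs eps Heps.
  destruct (pow_lt_1_zero (/4)) with (y := eps / (2 * (K + 1))) as [N HN].
  { rewrite Rabs_pos_eq; lra. }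
  { apply Rdiv_lt_0_compat; lra. }
  exists N. intros n m Hn Hm. unfold R_dist.
  specialize (HN N (le_n N)). rewrite Rabs_pos_eq in HN by (apply pow_le; lra).
  assert (Hw : K * (/4) ^ N < eps / 2).
  { apply Rle_lt_trans with ((K + 1) * (/4) ^ N).
    - pose proof (pow_le (/4) N); nra.
    - apply Rlt_le_trans with ((K + 1) * (eps / (2 * (K + 1)))).
      + apply Rmult_lt_compat_l; lra.
      + right. field. lra. }
  pose proof (Hs N n Hn). pose proof (Hs N m Hm).
  pose proof (Rabs_triang (s n - s N) (s N - s m)).
  replace (s n - s N + (s N - s m)) with (s n - s m) in H1 by ring.
  rewrite (Rabs_minus_sym (s N)) in H1. lra.
Qed.

Lemma cv_dist_le (s : nat -> R) (l c e : R) (N : nat) : Un_cv s l ->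
  (forall m, (N <= m)%nat -> Rabs (s m - c) <= e) -> Rabs (l - c) <= e.
Proof.
  intros Hs Hb. apply Rnot_lt_le. intros Hlt.
  destruct (Hs (Rabs (l - c) - e)) as [M HM]; [lra|].
  specialize (HM (max N M) (Nat.le_max_r _ _)). specialize (Hb (max N M) (Nat.le_max_l _ _)).
  unfold R_dist in HM. rewrite Rabs_minus_sym in HM.
  pose proof (Rabs_triang (l - s (max N M)) (s (max N M) - c)) as H.
  replace (l - s (max N M) + (s (max N M) - c)) with (l - c) in H by ring. lra.
Qed.

(** * The gliding hump *)

Definition sgn (r : R) : R := if Rle_dec 0 r then 1 else -1.

Lemma Rabs_sgn (r : R) : Rabs (sgn r) = 1.
Proof. unfold sgn; destruct Rle_dec; unfold Rabs; destruct Rcase_abs; lra. Qed.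

Lemma Rabs_add_sgn (r w : R) : 0 <= w -> Rabs (r + w * sgn r) = Rabs r + w.
Proof. intros Hw. unfold sgn; destruct Rle_dec; unfold Rabs; repeat destruct Rcase_abs; lra. Qed.

Section GlidingHump.
Context {A : BanachAlgebra} (V : A -> Prop) (p : A -> R).
Hypothesis VD : forall x y, V x -> V y -> V (add x y).
Hypothesis VZ : forall t x, V x -> V (rscal t x).
Hypothesis p_ge0 : forall x, V x -> 0 <= p x.

Lemma rlinear_limit (h : nat -> A -> R) (u : A -> R) : (forall n, rlinear V (h n)) ->
  (forall x, V x -> Un_cv (fun n => h n x) (u x)) -> rlinear V u.
Proof.
  intros Hh Hu. split.
  - intros x y Hx Hy. apply UL_sequence with (fun n => h n (add x y)); [apply Hu; auto|].
    apply Un_cv_ext with (fun n => h n x + h n y).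
    + intros n. symmetry. apply Hh; auto.
    + apply CV_plus; auto.
  - intros t x Hx. apply UL_sequence with (fun n => h n (rscal t x)); [apply Hu; auto|].
    apply Un_cv_ext with (fun n => t * h n x).
    + intros n. symmetry. apply Hh; auto.
    + apply CV_mult; [apply Un_cv_const | auto].
Qed.

Variable b : nat -> A.
Variable phi : nat -> A -> R.
Hypothesis Vb : forall k, V (b k).
Hypothesis p_b : forall k, p (b k) <= 1.
Hypothesis phi_rlinear : forall k, rlinear V (phi k).
Hypothesis phi_le : forall k x, V x -> Rabs (phi k x) <= p x.
Hypothesis phi_b : forall k, phi k (b k) = 1.

(* Partial sums of  sum_k 4^-k sgn(h_k(b_k)) phi_k: the k-th term pushes the
   value at b_k further away from 0. *)
Fixpoint hump (n : nat) (x : A) : R :=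
  match n with
  | O => 0
  | S k => hump k x + (/4) ^ k * sgn (hump k (b k)) * phi k x
  end.

Lemma hump_rlinear (n : nat) : rlinear V (hump n).
Proof.
  induction n as [|k IH]; split; intros; simpl; try ring.
  - rewrite (proj1 IH), (proj1 (phi_rlinear k)) by auto. ring.
  - rewrite (proj2 IH), (proj2 (phi_rlinear k)) by auto. ring.
Qed.

Lemma hump_step (k : nat) (x : A) : V x -> Rabs (hump (S k) x - hump k x) <= (/4) ^ k * p x.
Proof.
  intros Hx. simpl.
  replace (hump k x + (/4) ^ k * sgn (hump k (b k)) * phi k x - hump k x)
    with ((/4) ^ k * (sgn (hump k (b k)) * phi k x)) by ring.
  rewrite !Rabs_mult, Rabs_sgn, (Rabs_pos_eq ((/4) ^ k)) by (apply pow_le; lra).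
  pose proof (phi_le k x Hx). pose proof (pow_le (/4) k). nra.
Qed.

Lemma hump_tail (n m : nat) (x : A) : (n <= m)%nat -> V x ->
  Rabs (hump m x - hump n x) <= 4/3 * p x * (/4) ^ n.
Proof.
  intros Hnm Hx.
  assert (Hsum : forall j, Rabs (hump (n + j) x - hump n x) <= 4/3 * ((/4) ^ n - (/4) ^ (n + j)) * p x).
  { induction j as [|j IH].
    - rewrite Nat.add_0_r, !Rminus_diag, Rabs_R0. lra.
    - rewrite Nat.add_succ_r.
      pose proof (hump_step (n + j) x Hx).
      pose proof (Rabs_triang (hump (S (n + j)) x - hump (n + j) x) (hump (n + j) x - hump n x)).
      replace (hump (S (n + j)) x - hump (n + j) x + (hump (n + j) x - hump n x))
        with (hump (S (n + j)) x - hump n x) in H0 by ring.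
      simpl ((/4) ^ S (n + j)). nra. }
  replace m with (n + (m - n))%nat by lia.
  pose proof (Hsum (m - n)%nat). pose proof (pow_le (/4) (n + (m - n))). pose proof (p_ge0 x Hx). nra.
Qed.

Lemma hump_peak (n : nat) : (/4) ^ n <= Rabs (hump (S n) (b n)).
Proof.
  simpl. rewrite phi_b, Rmult_1_r, Rabs_add_sgn by (apply pow_le; lra).
  pose proof (Rabs_pos (hump n (b n))). lra.
Qed.

Lemma gliding_hump : exists u : A -> R, rlinear V u /\
  (forall x, V x -> Rabs (u x) <= 4/3 * p x) /\
  (forall n, 2/3 * (/4) ^ n <= Rabs (u (b n))).
Proof.
  pose (u := fun x => lim (fun n => hump n x)).
  assert (Hcv : forall x, V x -> Un_cv (fun n => hump n x) (u x)).
  { intros x Hx. apply lim_spec, (geometric_cauchy _ (4/3 * p x)).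
    - pose proof (p_ge0 x Hx). lra.
    - intros n m Hnm. apply hump_tail; auto. }
  assert (Htail : forall x n, V x -> Rabs (u x - hump n x) <= 4/3 * p x * (/4) ^ n).
  { intros x n Hx. apply (cv_dist_le _ _ _ _ n (Hcv x Hx)). intros m Hm. apply hump_tail; auto. }
  exists u. split; [|split].
  - apply (rlinear_limit hump); [exact hump_rlinear | exact Hcv].
  - intros x Hx. specialize (Htail x O Hx). simpl in Htail.
    rewrite Rminus_0_r, Rmult_1_r in Htail. exact Htail.
  - intros n. specialize (Htail (b n) (S n) (Vb n)). simpl ((/4) ^ S n) in Htail.
    pose proof (hump_peak n). pose proof (p_b n). pose proof (p_ge0 (b n) (Vb n)).
    pose proof (Rabs_triang_inv (hump (S n) (b n)) (u (b n))).
    rewrite Rabs_minus_sym in H2. pose proof (pow_le (/4) n). nra.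
Qed.

End GlidingHump.

(** * Complexification of real-linear functionals *)

Section Complexification.
Context {A : BanachAlgebra} (mem : A -> Prop) (nB : A -> R).
Hypothesis mem_scal : forall c x, mem x -> mem (scal c x).
Hypothesis nB_scal : forall c x, mem x -> nB (scal c x) = Cabs c * nB x.

(* The complex-linear functional with real part u. *)
Definition complexify (u : A -> R) : A -> Defs.C := fun x => mkC (u x) (- u (scal Ci x)).

Lemma complexify_in_dual (u : A -> R) (K : R) : rlinear mem u -> 0 <= K ->
  (forall x, mem x -> Rabs (u x) <= K * nB x) -> in_dual A mem nB (complexify u).
Proof.
  intros [Hadd Hhom] HK Hb.
  assert (Hr : forall t x, mem x -> mem (rscal t x)) by (intros; apply mem_scal; auto).
  split; [|split].
  - intros x y Hx Hy. unfold complexify.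
    rewrite scal_addr, !Hadd by auto. unfold Cadd; simpl. f_equal; ring.
  - intros [a b'] x Hx. unfold complexify.
    rewrite Ci_scal_re_im, scal_re_im, !Hadd, !Hhom by auto.
    unfold Cmul; simpl. f_equal; ring.
  - exists (2 * K). split; [lra|]. intros x Hx. unfold complexify.
    eapply Rle_trans; [apply Cabs_le_parts|]. rewrite Rabs_Ropp.
    pose proof (Hb x Hx). pose proof (Hb _ (mem_scal Ci x Hx)).
    rewrite nB_scal, Cabs_Ci, Rmult_1_l in H0 by auto. lra.
Qed.

End Complexification.

(** * A proper Segal algebra carries a functional unbounded for the norm of A *)

Definition A_bounded {A : BanachAlgebra} (mem : A -> Prop) (g : A -> Defs.C) : Prop :=
  exists D, forall a, mem a -> Cabs (g a) <= D * norm a.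

Section ProperSegal.
Context {A : BanachAlgebra} (mem : A -> Prop) (nB : A -> R).
Hypothesis HS : SegalBanach A mem nB.

Lemma segal_mem0 : mem zero.
Proof. destruct HS as (H & _). exact H. Qed.

Lemma segal_mem_add (x y : A) : mem x -> mem y -> mem (add x y).
Proof. destruct HS as (_ & H & _). apply H. Qed.

Lemma segal_mem_scal (c : Defs.C) (x : A) : mem x -> mem (scal c x).
Proof. destruct HS as (_ & _ & H & _). apply H. Qed.

Lemma segal_mem_rscal (t : R) (x : A) : mem x -> mem (rscal t x).
Proof. apply segal_mem_scal. Qed.

Lemma segal_nB_ge0 (x : A) : mem x -> 0 <= nB x.
Proof. destruct HS as (_ & _ & _ & _ & H & _). apply H. Qed.

Lemma segal_nB_scal (c : Defs.C) (x : A) : mem x -> nB (scal c x) = Cabs c * nB x.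
Proof. destruct HS as (_ & _ & _ & _ & _ & _ & _ & H & _). apply H. Qed.

Lemma segal_nB_rscal (t : R) (x : A) : mem x -> nB (rscal t x) = Rabs t * nB x.
Proof. intros Hx. unfold rscal. rewrite segal_nB_scal, Cabs_real by exact Hx. reflexivity. Qed.

Lemma segal_nB_sublinear : sublinear mem nB.
Proof.
  split.
  - destruct HS as (_ & _ & _ & _ & _ & _ & H & _). exact H.
  - intros t x Ht Hx. rewrite segal_nB_rscal, Rabs_pos_eq by auto. reflexivity.
Qed.

Lemma segal_nB_odd (x : A) : mem x -> nB (rscal (-1) x) = nB x.
Proof.
  intros Hx. rewrite segal_nB_rscal by exact Hx.
  replace (Rabs (-1)) with 1 by (unfold Rabs; destruct Rcase_abs; lra). ring.
Qed.

Hypothesis embed : exists K, forall b, mem b -> norm b <= K * nB b.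
Hypothesis Hproper : proper A mem nB.

Lemma small_unit_vectors (d : R) : 0 < d -> exists b, mem b /\ nB b = 1 /\ d * norm b < 1.
Proof.
  intros Hd. destruct embed as [K HK].
  apply NNPP. intros Hnone. apply Hproper.
  exists (Rabs K + 1), d. split; [pose proof (Rabs_pos K); lra | split; [exact Hd|]].
  intros b Hb. pose proof (segal_nB_ge0 b Hb). split.
  - apply Rle_trans with (K * nB b); auto. pose proof (Rle_abs K). nra.
  - destruct (Rle_dec (nB b) (d * norm b)) as [Hle | Hlt]; [exact Hle|]. exfalso. apply Hnone.
    assert (Hpos : 0 < nB b) by (pose proof (norm_ge0 A b); nra).
    assert (Hinv : 0 <= / nB b) by (apply Rlt_le, Rinv_0_lt_compat; exact Hpos).
    exists (rscal (/ nB b) b). split; [apply segal_mem_rscal; exact Hb | split].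
    + rewrite segal_nB_rscal, Rabs_pos_eq by auto. field. lra.
    + rewrite norm_rscal, Rabs_pos_eq by exact Hinv.
      apply Rmult_lt_reg_r with (nB b); [exact Hpos|].
      replace (d * (/ nB b * norm b) * nB b) with (d * norm b) by (field; lra). lra.
Qed.

Lemma unbounded_dual_element : exists g, in_dual A mem nB g /\ ~ A_bounded mem g.
Proof.
  assert (Hpick : forall n : nat, exists bp : A * (A -> R),
    (mem (fst bp) /\ nB (fst bp) = 1 /\ (INR n + 1) / (/4) ^ n * norm (fst bp) < 1) /\
    (rlinear mem (snd bp) /\ (forall x, mem x -> Rabs (snd bp x) <= nB x) /\ snd bp (fst bp) = 1)).
  { intros n.
    assert (Hd : 0 < (INR n + 1) / (/4) ^ n).
    { apply Rdiv_lt_0_compat; [pose proof (pos_INR n); lra | apply pow_lt; lra]. }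
    destruct (small_unit_vectors _ Hd) as [b [Hb [Hb1 Hsmall]]].
    destruct (norming_functional mem segal_mem0 segal_mem_add segal_mem_rscal nB b
                segal_nB_sublinear segal_nB_odd Hb) as [phi [Hlin [Hle Hphib]]].
    exists (b, phi). simpl. rewrite Hphib, Hb1. auto. }
  destruct (choice _ Hpick) as [bp Hbp].
  destruct (gliding_hump mem nB segal_mem_add segal_mem_rscal segal_nB_ge0
              (fun n => fst (bp n)) (fun n => snd (bp n))) as [u [Hu [Hub Hpeak]]].
  { intros n. destruct (Hbp n) as [[H _] _]. exact H. }
  { intros n. destruct (Hbp n) as [[_ [H _]] _]. rewrite H. lra. }
  { intros n. destruct (Hbp n) as [_ [H _]]. exact H. }
  { intros n x. destruct (Hbp n) as [_ [_ [H _]]]. apply H. }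
  { intros n. destruct (Hbp n) as [_ [_ [_ H]]]. exact H. }
  exists (complexify u). split.
  - apply (complexify_in_dual mem nB segal_mem_scal segal_nB_scal u (4/3)); auto; lra.
  - intros [D HD].
    destruct (INR_archimed 1 (3/2 * D)) as [n Hn]; [lra|]. rewrite Rmult_1_r in Hn.
    destruct (Hbp n) as [[Hbn [_ Hsmall]] _]. set (bn := fst (bp n)) in *.
    assert (Hup : Rabs (u bn) <= D * norm bn).
    { apply Rle_trans with (Cabs (complexify u bn)); [apply (Re_le_Cabs (complexify u bn)) | auto]. }
    pose proof (Hpeak n). fold bn in H.
    assert (Hw : 0 < (/4) ^ n) by (apply pow_lt; lra).
    assert (Hsmall' : (INR n + 1) * norm bn < (/4) ^ n).
    { replace ((INR n + 1) * norm bn) with ((INR n + 1) / (/4) ^ n * norm bn * (/4) ^ n)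
        by (field; lra).
      pose proof (Rmult_lt_compat_r _ _ _ Hw Hsmall). lra. }
    pose proof (norm_ge0 A bn). pose proof (pos_INR n). nra.
Qed.

End ProperSegal.

(** * The Arens-type products are bounded for the norm of A *)

Section ModuleActions.
Context {A : BanachAlgebra} (mem : A -> Prop) (nB : A -> R).
Hypothesis nB_ge0 : forall x, mem x -> 0 <= nB x.

Lemma right_translate_dual (K Kf : R) (f : A -> Defs.C) (a : A) :
  (forall b a, mem b -> mem (mul b a)) ->
  (forall b a, mem b -> nB (mul b a) <= K * nB b * norm a) ->
  in_dual A mem nB f -> fbound A mem nB f Kf ->
  in_dual A mem nB (tri_af A a f) /\ fbound A mem nB (tri_af A a f) (Kf * Rabs K * norm a).
Proof.
  intros Hid HK [Hfadd [Hfscal _]] [HKf Hfb].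
  assert (Hbound : fbound A mem nB (tri_af A a f) (Kf * Rabs K * norm a)).
  { split.
    - pose proof (Rabs_pos K). pose proof (norm_ge0 A a).
      apply Rmult_le_pos; [apply Rmult_le_pos|]; auto.
    - intros x Hx. unfold tri_af. eapply Rle_trans; [apply Hfb, Hid, Hx|].
      pose proof (HK x a Hx). pose proof (nB_ge0 x Hx). pose proof (norm_ge0 A a).
      pose proof (Rle_abs K). assert (0 <= nB x * norm a) by nra.
      assert (Hxa : nB (mul x a) <= Rabs K * (nB x * norm a)) by nra.
      replace (Kf * Rabs K * norm a * nB x) with (Kf * (Rabs K * (nB x * norm a))) by ring.
      apply Rmult_le_compat_l; assumption. }
  split; [split; [|split] | exact Hbound].
  - intros x y Hx Hy. unfold tri_af. rewrite mul_addl. apply Hfadd; auto.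
  - intros c x Hx. unfold tri_af. rewrite mul_scall. apply Hfscal; auto.
  - eauto.
Qed.

Lemma left_translate_dual (K Kf : R) (f : A -> Defs.C) (a : A) :
  (forall b a, mem b -> mem (mul a b)) ->
  (forall b a, mem b -> nB (mul a b) <= K * norm a * nB b) ->
  in_dual A mem nB f -> fbound A mem nB f Kf ->
  in_dual A mem nB (sq_fa A f a) /\ fbound A mem nB (sq_fa A f a) (Kf * Rabs K * norm a).
Proof.
  intros Hid HK [Hfadd [Hfscal _]] [HKf Hfb].
  assert (Hbound : fbound A mem nB (sq_fa A f a) (Kf * Rabs K * norm a)).
  { split.
    - pose proof (Rabs_pos K). pose proof (norm_ge0 A a).
      apply Rmult_le_pos; [apply Rmult_le_pos|]; auto.
    - intros x Hx. unfold sq_fa. eapply Rle_trans; [apply Hfb, Hid, Hx|].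
      pose proof (HK x a Hx). pose proof (nB_ge0 x Hx). pose proof (norm_ge0 A a).
      pose proof (Rle_abs K). assert (0 <= nB x * norm a) by nra.
      assert (Hxa : nB (mul a x) <= Rabs K * (nB x * norm a)) by nra.
      replace (Kf * Rabs K * norm a * nB x) with (Kf * (Rabs K * (nB x * norm a))) by ring.
      apply Rmult_le_compat_l; assumption. }
  split; [split; [|split] | exact Hbound].
  - intros x y Hx Hy. unfold sq_fa. rewrite mul_addr. apply Hfadd; auto.
  - intros c x Hx. unfold sq_fa. rewrite mul_scalr. apply Hfscal; auto.
  - eauto.
Qed.

Lemma tri_fm_bounded (K : R) (f : A -> Defs.C) (m : (A -> Defs.C) -> Defs.C) :
  (forall b a, mem b -> mem (mul b a)) ->
  (forall b a, mem b -> nB (mul b a) <= K * nB b * norm a) ->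
  in_dual A mem nB f -> in_bidual A mem nB m ->
  exists D, forall a, Cabs (tri_fm A f m a) <= D * norm a.
Proof.
  intros Hid HK Hf [_ [_ [M [HM Hm]]]]. destruct Hf as [Hfl [Hfs [Kf HKf]]].
  exists (M * (Kf * Rabs K)). intros a. unfold tri_fm.
  destruct (right_translate_dual K Kf f a Hid HK (conj Hfl (conj Hfs (ex_intro _ Kf HKf))) HKf)
    as [Hd Hb].
  eapply Rle_trans; [apply Hm; eauto | right; ring].
Qed.

Lemma sq_mf_bounded (K : R) (m : (A -> Defs.C) -> Defs.C) (f : A -> Defs.C) :
  (forall b a, mem b -> mem (mul a b)) ->
  (forall b a, mem b -> nB (mul a b) <= K * norm a * nB b) ->
  in_bidual A mem nB m -> in_dual A mem nB f ->
  exists D, forall a, Cabs (sq_mf A m f a) <= D * norm a.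
Proof.
  intros Hid HK [_ [_ [M [HM Hm]]]] Hf. destruct Hf as [Hfl [Hfs [Kf HKf]]].
  exists (M * (Kf * Rabs K)). intros a. unfold sq_mf.
  destruct (left_translate_dual K Kf f a Hid HK (conj Hfl (conj Hfs (ex_intro _ Kf HKf))) HKf)
    as [Hd Hb].
  eapply Rle_trans; [apply Hm; eauto | right; ring].
Qed.

Lemma span_tri_bounded (K : R) (g : A -> Defs.C) :
  (forall b a, mem b -> mem (mul b a)) ->
  (forall b a, mem b -> nB (mul b a) <= K * nB b * norm a) ->
  span_tri A mem nB g -> A_bounded mem g.
Proof.
  intros Hid HK [l [Hl Hg]].
  destruct (lincomb_bounded (@norm A) _ (fun t => fst (fst t))
              (fun t a => tri_fm A (snd (fst t)) (snd t) a) l Hl) as [D HD].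
  { intros t [Hf Hm]. eapply tri_fm_bounded; eauto. }
  exists D. intros a Ha. rewrite Hg by exact Ha. apply HD.
Qed.

Lemma span_sq_bounded (K : R) (g : A -> Defs.C) :
  (forall b a, mem b -> mem (mul a b)) ->
  (forall b a, mem b -> nB (mul a b) <= K * norm a * nB b) ->
  span_sq A mem nB g -> A_bounded mem g.
Proof.
  intros Hid HK [l [Hl Hg]].
  destruct (lincomb_bounded (@norm A) _ (fun t => fst (fst t))
              (fun t a => sq_mf A (snd (fst t)) (snd t) a) l Hl) as [D HD].
  { intros t [Hm Hf]. eapply sq_mf_bounded; eauto. }
  exists D. intros a Ha. rewrite Hg by exact Ha. apply HD.
Qed.

End ModuleActions.

Theorem theorem1 (A : BanachAlgebra) (hA : faithful A) :
  (forall (mem : A -> Prop) (nB : A -> R),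
     right_segal A mem nB -> proper A mem nB ->
     ~ (forall g, in_dual A mem nB g <-> span_tri A mem nB g)) /\
  (forall (mem : A -> Prop) (nB : A -> R),
     left_segal A mem nB -> proper A mem nB ->
     ~ (forall g, in_dual A mem nB g <-> span_sq A mem nB g)).
Proof.
  split.
  - intros mem nB [HS [Hid [K [Hemb HK]]]] Hproper Hspan.
    destruct (unbounded_dual_element mem nB HS (ex_intro _ K Hemb) Hproper) as [g [Hg Hunb]].
    apply Hunb, (span_tri_bounded mem nB (segal_nB_ge0 mem nB HS) K g Hid HK).
    apply Hspan, Hg.
  - intros mem nB [HS [Hid [K [Hemb HK]]]] Hproper Hspan.
    destruct (unbounded_dual_element mem nB HS (ex_intro _ K Hemb) Hproper) as [g [Hg Hunb]].
    apply Hunb, (span_sq_bounded mem nB (segal_nB_ge0 mem nB HS) K g Hid HK).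
    apply Hspan, Hg.
Qed.
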